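(* Let $A$ be a sesquiad. (a) The space $\operatorname{spec}_cA$ is irreducible if and only if $A^{\mathrm{red}}$ is integral. (b) The space $\operatorname{spec}_cA$ is sober, i.e. every non-empty irreducible closed subset has a unique generic point.
   Context: Monoids are commutative with $1$ and a zero $0$. A sesquiad is a monoid $A$ with an addition: partially defined sums $\sum_jk_ja_j$ coming from an injective monoid morphism $\varphi:A\to R$ into a commutative ring with $\varphi(0)=0$, defined exactly when $\sum_jk_j\varphi(a_j)\in\varphi(A)$. A congruence is an equivalence relation $\mathcal C$ on $A$ such that $A/\mathcal C$ admits an addition making $A\to A/\mathcal C$ a sesquiad morphism (the minimal such addition is used on $A/\mathcal C$). A sesquiad is integral if $1\ne0$ and $af=bf$ implies $a=b$ or $f=0$; a congruence is prime if $A/\mathcal C$ is integral. $\operatorname{spec}_cA$ is the set of prime congruences with topology generated by $D(a,b)=\{\mathcal C:(a,b)\notin\mathcal C\}$. $\operatorname{Nil}(A)=\bigcap_{E\in\operatorname{spec}_cA}E$ and $A^{\mathrm{red}}=A/\operatorname{Nil}(A)$. A space is irreducible if it is not the union of two proper closed subsets. *)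

From HB Require Import structures.
From mathcomp Require Import all_boot all_order all_algebra.
Set Implicit Arguments. Unset Strict Implicit. Unset Printing Implicit Defensive.
Import GRing.Theory.
Local Open Scope ring_scope.

(* A sesquiad: a commutative monoid with 1 and an absorbing 0, together with a
   partially defined addition.  [ssum l a] means: the formal sum
   sum_j k_j a_j (with l = [:: (k_1,a_1); ...]) is defined and equals a. *)
Record sesquiad := Sesquiad {
  carrier :> Type;
  smul : carrier -> carrier -> carrier;
  sone : carrier;
  szero : carrier;
  smulC : forall x y, smul x y = smul y x;
  smulA : forall x y z, smul x (smul y z) = smul (smul x y) z;
  smul1 : forall x, smul sone x = x;
  smul0 : forall x, smul szero x = szero;
  ssum : seq (int * carrier) -> carrier -> Prop;
  ssum_realized : exists (R : comPzRingType) (phi : carrier -> R),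
    injective phi /\ phi sone = 1 /\ phi szero = 0 /\
    (forall x y, phi (smul x y) = phi x * phi y) /\
    (forall l a, ssum l a <-> \sum_(p <- l) (phi p.2) *~ p.1 = phi a)
}.

Definition sesq_morphism (S T : sesquiad) (f : S -> T) : Prop :=
  f (sone S) = sone T /\ f (szero S) = szero T /\
  (forall x y, f (smul x y) = smul (f x) (f y)) /\
  (forall l a, ssum l a -> ssum [seq (p.1, f p.2) | p <- l] (f a)).

(* A congruence: an equivalence relation C such that the quotient A/C
   (represented by any surjection pi : A -> Q with kernel C) carries a
   sesquiad structure making the projection a sesquiad morphism. *)
Definition congruence (A : sesquiad) (C : A -> A -> Prop) : Prop :=
  (forall a, C a a) /\ (forall a b, C a b -> C b a) /\
  (forall a b c, C a b -> C b c -> C a c) /\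
  exists (Q : sesquiad) (pi : A -> Q),
    (forall q : Q, exists a, pi a = q) /\
    (forall a b, pi a = pi b <-> C a b) /\
    sesq_morphism pi.

Definition integral (S : sesquiad) : Prop :=
  sone S <> szero S /\
  forall a b f : S, smul a f = smul b f -> a = b \/ f = szero S.

(* integrality of the quotient monoid A/E, expressed on representatives *)
Definition quot_integral (A : sesquiad) (E : A -> A -> Prop) : Prop :=
  ~ E (sone A) (szero A) /\
  forall a b f : A, E (smul a f) (smul b f) -> E a b \/ E f (szero A).

Definition prime_congruence (A : sesquiad) (C : A -> A -> Prop) : Prop :=
  congruence C /\ quot_integral C.

Definition spec_c (A : sesquiad) := {E : A -> A -> Prop | prime_congruence E}.

Definition Dset (A : sesquiad) (a b : A) : spec_c A -> Prop :=
  fun E => ~ sval E a b.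

Inductive is_open (A : sesquiad) : (spec_c A -> Prop) -> Prop :=
| open_D (a b : A) : is_open (Dset a b)
| open_full : is_open (fun _ => True)
| open_inter U V : is_open U -> is_open V -> is_open (fun x => U x /\ V x)
| open_union (I : Type) (F : I -> spec_c A -> Prop) :
    (forall i, is_open (F i)) -> is_open (fun x => exists i, F i x)
| open_ext U V : is_open U -> (forall x, U x <-> V x) -> is_open V.

Definition is_closed (A : sesquiad) (Z : spec_c A -> Prop) : Prop :=
  is_open (fun x => ~ Z x).

Definition irreducible_sub (A : sesquiad) (Y : spec_c A -> Prop) : Prop :=
  (exists y, Y y) /\
  ~ (exists Z1 Z2 : spec_c A -> Prop,
       (exists F1, is_closed F1 /\ forall x, Z1 x <-> Y x /\ F1 x) /\
       (exists F2, is_closed F2 /\ forall x, Z2 x <-> Y x /\ F2 x) /\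
       (exists y, Y y /\ ~ Z1 y) /\ (exists y, Y y /\ ~ Z2 y) /\
       (forall x, Y x <-> Z1 x \/ Z2 x)).

Definition irreducible_space (A : sesquiad) : Prop :=
  irreducible_sub (fun _ : spec_c A => True).

Definition closure_pt (A : sesquiad) (x : spec_c A) : spec_c A -> Prop :=
  fun y => forall F, is_closed F -> F x -> F y.

Definition generic_point (A : sesquiad) (Z : spec_c A -> Prop) (x : spec_c A) :=
  forall y, Z y <-> closure_pt x y.

Definition sober (A : sesquiad) : Prop :=
  forall Z : spec_c A -> Prop, is_closed Z -> irreducible_sub Z ->
    exists x, generic_point Z x /\ forall y, generic_point Z y -> y = x.

(* Nil(A) = intersection of all prime congruences; A^red = A / Nil(A) *)
Definition NilRel (A : sesquiad) (a b : A) : Prop :=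
  forall E : spec_c A, sval E a b.

From HB Require Import structures.
From mathcomp Require Import all_boot all_order all_algebra.
From mathcomp Require Import boolp.
Set Implicit Arguments. Unset Strict Implicit. Unset Printing Implicit Defensive.
Import GRing.Theory.
Local Open Scope ring_scope.

(* A relation on a sesquiad is a congruence exactly when it is the kernel of a
   monoid map into a commutative ring sending defined sums to sums, so
   intersections of congruences are congruences (take the product ring).  In
   spec_c A a point specializes to another exactly when it is contained in it.
   A set Y of primes is irreducible iff the intersection nil_on Y is prime;
   then nil_on Y is a point whose closure contains Y.  If Y is moreover closed,
   every open neighbourhood of nil_on Y meets Y (irreducibility handles finite
   intersections), so nil_on Y lies in Y and is its generic point, unique since
   specialization is antisymmetric.  Taking Y to be the whole space gives (a). *)

Section ProdRing.
Variables (I : Type) (R : I -> comPzRingType).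

Definition prod_ring := forall i, R i.

HB.instance Definition _ := Choice.copy prod_ring (forall i, R i).

Lemma prod_ring_ext (f g : prod_ring) : (forall i, f i = g i) -> f = g.
Proof. exact: functional_extensionality_dep. Qed.

Let add (f g : prod_ring) : prod_ring := fun i => f i + g i.
Let opp (f : prod_ring) : prod_ring := fun i => - f i.
Let mul (f g : prod_ring) : prod_ring := fun i => f i * g i.

Let addA : associative add.
Proof. by move=> f g h; apply: prod_ring_ext => i; exact: addrA. Qed.
Let addC : commutative add.
Proof. by move=> f g; apply: prod_ring_ext => i; exact: addrC. Qed.
Let add0 : left_id (fun i => 0) add.
Proof. by move=> f; apply: prod_ring_ext => i; exact: add0r. Qed.
Let addN : left_inverse (fun i => 0) opp add.
Proof. by move=> f; apply: prod_ring_ext => i; exact: addNr. Qed.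

HB.instance Definition _ := GRing.isZmodule.Build prod_ring addA addC add0 addN.

Let mulA : associative mul.
Proof. by move=> f g h; apply: prod_ring_ext => i; exact: mulrA. Qed.
Let mulC : commutative mul.
Proof. by move=> f g; apply: prod_ring_ext => i; exact: mulrC. Qed.
Let mul1 : left_id (fun i => 1) mul.
Proof. by move=> f; apply: prod_ring_ext => i; exact: mul1r. Qed.
Let mulD : left_distributive mul +%R.
Proof. by move=> f g h; apply: prod_ring_ext => i; exact: mulrDl. Qed.

HB.instance Definition _ := GRing.Zmodule_isComPzRing.Build prod_ring mulA mulC mul1 mulD.

Lemma prod_ring_sumE (T : Type) (s : seq T) (F : T -> prod_ring) i :
  (\sum_(t <- s) F t) i = \sum_(t <- s) F t i.
Proof. by elim: s => [|t s IH]; rewrite ?big_nil // !big_cons -IH. Qed.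

Lemma prod_ring_mulzE (f : prod_ring) (k : int) i : (f *~ k) i = f i *~ k.
Proof.
have mulrnE n : (f *+ n) i = f i *+ n by elim: n => [|n IH]; rewrite ?mulr0n // !mulrS -IH.
case: k => n; first by rewrite -!pmulrn mulrnE.
by rewrite NegzE !mulrNz -!pmulrn -mulrnE.
Qed.

End ProdRing.

Definition ring_model (A : sesquiad) (R : comPzRingType) (phi : A -> R) : Prop :=
  [/\ phi (sone A) = 1, phi (szero A) = 0,
      {morph phi : x y / smul x y >-> x * y} &
      forall l a, ssum l a -> \sum_(p <- l) phi p.2 *~ p.1 = phi a].

Section ImageSesquiad.
Variables (A : sesquiad) (R : comPzRingType) (phi : A -> R).
Hypothesis phi_model : ring_model phi.

Definition image_carrier := {r : R | exists a, r = phi a}.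

Definition image_in (a : A) : image_carrier := exist _ (phi a) (ex_intro _ a erefl).

Let val_inj : injective (@sval R _ : image_carrier -> R).
Proof. by move=> [r ?] [s ?] /= rs; apply: eq_exist. Qed.

Let image_mulP (x y : image_carrier) : exists c, sval x * sval y = phi c.
Proof.
case: phi_model => _ _ phiM _; case: x => r [a ra]; case: y => s [b sb] /=.
by exists (smul a b); rewrite phiM ra sb.
Qed.

Let mul (x y : image_carrier) : image_carrier := exist _ (sval x * sval y) (image_mulP x y).
Let one := image_in (sone A).
Let zero := image_in (szero A).
Let sum (l : seq (int * image_carrier)) (x : image_carrier) : Prop :=
  \sum_(p <- l) sval p.2 *~ p.1 = sval x.

Let mulC x y : mul x y = mul y x. Proof. by apply: val_inj; rewrite /= mulrC. Qed.
Let mulA x y z : mul x (mul y z) = mul (mul x y) z.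
Proof. by apply: val_inj; rewrite /= mulrA. Qed.
Let mul1 x : mul one x = x.
Proof. by apply: val_inj; case: phi_model => /= -> _ _ _; rewrite mul1r. Qed.
Let mul0 x : mul zero x = zero.
Proof. by apply: val_inj; case: phi_model => /= _ -> _ _; rewrite mul0r. Qed.

Let sum_realized : exists (S : comPzRingType) (psi : image_carrier -> S),
  injective psi /\ psi one = 1 /\ psi zero = 0 /\
  (forall x y, psi (mul x y) = psi x * psi y) /\
  (forall l a, sum l a <-> \sum_(p <- l) psi p.2 *~ p.1 = psi a).
Proof. by case: phi_model => phi1 phi0 _ _; exists R, sval. Qed.

Definition image_sesquiad : sesquiad := Sesquiad mulC mulA mul1 mul0 sum_realized.

Lemma congruence_kernel : congruence (fun a b => phi a = phi b).
Proof.
case: phi_model => _ _ phiM phiS.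
split=> [//|]; split=> [a b //|]; split=> [a b c -> //|].
exists image_sesquiad, image_in; split=> [[r [a ra]]|]; first by exists a; apply: val_inj.
split=> [a b|]; first by split=> [/(congr1 sval) | ab]; last apply: val_inj.
split=> //; split=> //; split=> [x y|l a /phiS]; first by apply: val_inj; rewrite /= phiM.
by rewrite /= /sum big_map.
Qed.

End ImageSesquiad.

Lemma congruence_model (A : sesquiad) (C : A -> A -> Prop) : congruence C ->
  exists (R : comPzRingType) (phi : A -> R),
    ring_model phi /\ forall a b, phi a = phi b <-> C a b.
Proof.
case=> _ [_ [_ [Q [pi [_ [piC [pi1 [pi0 [piM piS]]]]]]]]].
case: (ssum_realized Q) => R [psi [psi_inj [psi1 [psi0 [psiM psiS]]]]].
exists R, (psi \o pi); split.
  split=> /= [|||l a /piS /psiS]; rewrite ?pi1 ?pi0 ?big_map //.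
  by move=> x y /=; rewrite piM psiM.
by move=> a b; rewrite -piC; split=> [/psi_inj | /= ->].
Qed.

Lemma congruence_bigcap (A : sesquiad) (I : Type) (C : I -> A -> A -> Prop) :
  (forall i, congruence (C i)) -> congruence (fun a b => forall i, C i a b).
Proof.
move=> congC.
pose model i := cid (congruence_model (congC i)).
pose R i := sval (model i).
pose phi i : A -> R i := sval (cid (svalP (model i))).
have phi_spec i : ring_model (phi i) /\ forall a b, phi i a = phi i b <-> C i a b.
  exact: svalP (cid (svalP (model i))).
have phi_model i := (phi_spec i).1; have phiC i := (phi_spec i).2.
pose Phi a : prod_ring R := fun i => phi i a.
have Phi_model : ring_model Phi.
  split.
  - by apply: prod_ring_ext => i; case: (phi_model i).
  - by apply: prod_ring_ext => i; case: (phi_model i).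
  - move=> x y; apply: prod_ring_ext => i.
    by case: (phi_model i) => _ _ phiM _; rewrite /Phi phiM.
  - move=> l a sum_la; apply: prod_ring_ext => i.
    case: (phi_model i) => _ _ _ /(_ _ _ sum_la) phi_sum.
    rewrite [RHS]/Phi -phi_sum prod_ring_sumE.
    by apply: eq_bigr => p _; rewrite prod_ring_mulzE.
suff -> : (fun a b => forall i, C i a b) = (fun a b => Phi a = Phi b).
  exact: congruence_kernel.
apply: funext => a; apply: funext => b; apply: propext; split=> [Cab | PhiE i].
  by apply: prod_ring_ext => i; apply/phiC/Cab.
by apply/phiC; rewrite -/(Phi a i) PhiE.
Qed.

Section Spectrum.
Variable A : sesquiad.
Implicit Types (x y : spec_c A) (U V Y Z : spec_c A -> Prop).

Lemma is_closedC U : is_open U -> is_closed (fun x => ~ U x).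
Proof. by move=> openU; apply: open_ext openU _ => x; rewrite not_notE. Qed.

Lemma is_closed_rel (a b : A) : is_closed (fun x => sval x a b).
Proof. exact: open_D. Qed.

Lemma is_open_specialize U x y :
  is_open U -> (forall a b, sval x a b -> sval y a b) -> U y -> U x.
Proof.
elim=> {U} [a b|//|U V _ IHU _ IHV|I F _ IHF|U V _ IHU UV] xy.
- by move=> nyab /xy.
- by move=> [/(IHU xy) Ux /(IHV xy) Vx].
- by move=> [i /(IHF i xy) Fx]; exists i.
- by move=> /UV /(IHU xy) /UV.
Qed.

Lemma closure_ptE x y : closure_pt x y <-> forall a b, sval x a b -> sval y a b.
Proof.
split=> [xy a b|xy F closedF Fx]; first exact: xy _ (is_closed_rel a b).
by apply: contrapT => /(is_open_specialize closedF xy).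
Qed.

Lemma closure_pt_antisym x y : closure_pt x y -> closure_pt y x -> x = y.
Proof.
move=> /closure_ptE xy /closure_ptE yx; case: x y xy yx => [E PE] [E' PE'] /= xy yx.
apply: eq_exist; apply: funext => a; apply: funext => b.
by apply: propext; split; [apply: xy | apply: yx].
Qed.

Lemma irreducible_meet Y U V : irreducible_sub Y -> is_open U -> is_open V ->
  (exists y, Y y /\ U y) -> (exists y, Y y /\ V y) -> exists y, [/\ Y y, U y & V y].
Proof.
move=> [_ Y_irr] openU openV [y1 [Yy1 Uy1]] [y2 [Yy2 Vy2]].
apply: contrapT => noYUV; apply: Y_irr.
exists (fun x => Y x /\ ~ U x), (fun x => Y x /\ ~ V x).
split; first by exists (fun x => ~ U x); split=> //; exact: is_closedC.
split; first by exists (fun x => ~ V x); split=> //; exact: is_closedC.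
split; first by exists y1; split=> // -[].
split; first by exists y2; split=> // -[].
move=> x; split=> [Yx|]; last by case=> -[].
case: (pselect (U x)) => Ux; last by left.
case: (pselect (V x)) => Vx; last by right.
by case: noYUV; exists x.
Qed.

Lemma irreducible_of_generic Y eta :
  Y eta -> (forall y, Y y -> closure_pt eta y) -> irreducible_sub Y.
Proof.
move=> Y_eta eta_gen; split; first by exists eta.
move=> [Z1 [Z2 [[F1 [closedF1 Z1E]] [[F2 [closedF2 Z2E]]
  [[y1 [Yy1 nZy1]] [[y2 [Yy2 nZy2]] YE]]]]]].
case/YE: Y_eta => [/Z1E [_ F1eta] | /Z2E [_ F2eta]].
  by apply/nZy1/Z1E; split=> //; exact: eta_gen _ Yy1 _ closedF1 F1eta.
by apply/nZy2/Z2E; split=> //; exact: eta_gen _ Yy2 _ closedF2 F2eta.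
Qed.

Definition nil_on Y (a b : A) : Prop := forall y, Y y -> sval y a b.

Lemma NilRel_nil_onT : @NilRel A = nil_on (fun _ => True).
Proof.
apply: funext => a; apply: funext => b; apply: propext.
by split=> [nil_ab y _ | nil_ab y]; apply: nil_ab.
Qed.

Lemma congruence_nil_on Y : congruence (nil_on Y).
Proof.
have := congruence_bigcap (fun y : {y | Y y} => (svalP (sval y)).1).
congr congruence; apply: funext => a; apply: funext => b; apply: propext.
split=> [nil_ab y Yy | nil_ab y]; first exact: nil_ab (exist _ y Yy).
exact: nil_ab (svalP y).
Qed.

Lemma irreducible_quot_integral Y : irreducible_sub Y -> quot_integral (nil_on Y).
Proof.
move=> irrY; have [[y Yy] _] := irrY; split.
  by move=> /(_ y Yy); case: (svalP y).2.
move=> a b f nil_abf; apply: contrapT => /not_orP[nil_ab nil_f0].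
have meet_at (c d : A) : ~ nil_on Y c d -> exists y, Y y /\ Dset c d y.
  by rewrite /nil_on => /existsNP [z /not_implyP]; exists z.
have [z [Yz nzab nzf0]] := irreducible_meet irrY (open_D a b) (open_D f (szero A))
  (meet_at _ _ nil_ab) (meet_at _ _ nil_f0).
by case: ((svalP z).2.2 a b f (nil_abf z Yz)).
Qed.

Lemma irreducible_closed_mem Z x : irreducible_sub Z -> is_closed Z ->
  (forall a b, nil_on Z a b -> sval x a b) -> Z x.
Proof.
move=> irrZ closedZ Zx; apply: contrapT => nZx.
have meetZ U : is_open U -> U x -> exists y, Z y /\ U y.
  elim=> {U} [a b|_|U V openU IHU openV IHV|I F _ IHF|U V _ IHU UV].
  - by move=> /(contra_not (Zx a b)) /existsNP [y /not_implyP]; exists y.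
  - by case: irrZ => -[y Zy] _; exists y.
  - move=> [/IHU ZU /IHV ZV].
    by have [y [Zy Uy Vy]] := irreducible_meet irrZ openU openV ZU ZV; exists y.
  - by move=> [i /IHF [y [Zy Fy]]]; exists y; split=> //; exists i.
  - by move=> /UV /IHU [y [Zy Uy]]; exists y; split=> //; apply/UV.
by have [y [Zy []]] := meetZ _ closedZ nZx.
Qed.

Definition nil_pt Y (HY : quot_integral (nil_on Y)) : spec_c A :=
  exist _ (nil_on Y) (conj (congruence_nil_on Y) HY).

Lemma closure_nil_pt Y (HY : quot_integral (nil_on Y)) y :
  Y y -> closure_pt (nil_pt HY) y.
Proof. by move=> Yy; apply/closure_ptE => a b; apply. Qed.

End Spectrum.

Theorem mainTheorem11 (A : sesquiad) :
  (irreducible_space A <-> quot_integral (@NilRel A)) /\ sober A.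
Proof.
rewrite NilRel_nil_onT; split; [split|].
- exact: irreducible_quot_integral.
- move=> HY; apply: (irreducible_of_generic (eta := nil_pt HY)) => // y _.
  exact: closure_nil_pt.
move=> Z closedZ irrZ; pose eta := nil_pt (irreducible_quot_integral irrZ).
have Z_eta : Z eta by apply: irreducible_closed_mem.
have eta_generic : generic_point Z eta.
  by move=> y; split=> [|/(_ Z closedZ Z_eta)]; first exact: closure_nil_pt.
exists eta; split=> // y y_generic.
have Zy : Z y by apply/y_generic.
by apply: closure_pt_antisym; [apply/y_generic | apply/eta_generic].
Qed.
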